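(* Let $\mathcal{R}=\{f_1,\dots,f_m\}$ be the set of area inequalities of a Lagrangian diagram with crossings $q_1,\dots,q_n$, each $f_i$ of the form $\sum_{j=1}^n\alpha_{i,j}h(q_j)>0$ with $\alpha_{i,j}\in\{-2,-1,0,1,2\}$. Suppose the flooding algorithm succeeds, producing tiers $T_1,\dots,T_M$. Define integers $h_M=1$ and $h_k=1+\sum_{i=k+1}^M 2h_i|T_i|$ for $k=M-1,\dots,1$. Then assigning height $h(q)=h_k$ to each crossing $q\in T_k$, for $1\le k\le M$, gives a valid height assignment for the Lagrangian diagram, i.e. all inequalities in $\mathcal{R}$ are satisfied.
   Context: For a Lagrangian diagram (knot diagram planar isotopic to the Lagrangian projection $(x,y,z)\mapsto(x,y)$ of a Legendrian knot in $(\mathbb{R}^3, dz-y\,dx)$), an area patch is a bounded component of the complement of the diagram. Traversing the boundary of a patch $P$ with the boundary orientation, a corner where one passes from an understrand to an overstrand gets positive Reeb sign, other corners negative Reeb sign. The area inequality of $P$ is: the sum over corners of $P$ of (Reeb sign)$\cdot h(\text{crossing})$ is $>0$ (a crossing may appear with multiplicity, hence coefficients in $\{-2,\dots,2\}$); these form $\mathcal{R}$. Flooding algorithm: start with $\mathcal{R}'=\mathcal{R}$ and $k=1$. (i) Let $T_k=\{q_j:\alpha_{i,j}\ge0$ for every $f_i\in\mathcal{R}'\}$ among crossings not yet assigned to a tier. (ii) If $T_k=\emptyset$ the algorithm fails; otherwise, for each $q_j\in T_k$ remove from $\mathcal{R}'$ every $f_i$ with $\alpha_{i,j}>0$. (iii)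 If $\mathcal{R}'\ne\emptyset$, increase $k$ by one and return to (i); if $\mathcal{R}'=\emptyset$, let $T_{k+1}$ be the set of crossings in no earlier tier and $M=k+1$; the algorithm succeeds. The tiers partition $\{q_1,\dots,q_n\}$, and $|T_i|$ denotes the cardinality of $T_i$. *)

From mathcomp Require Import all_boot all_order all_algebra.
Set Implicit Arguments. Unset Strict Implicit. Unset Printing Implicit Defensive.
Import Order.TTheory GRing.Theory Num.Theory.
Local Open Scope ring_scope.

(* Crossings q_1..q_n are indexed by 'I_n, area inequalities f_1..f_m by 'I_m.
   The inequality f_i reads  \sum_j alpha i j * h(q_j) > 0. *)

(* Rp = current R' (set of remaining inequalities),
   U  = crossings not yet assigned to a tier. *)
Fixpoint flood_aux (m n : nat) (alpha : 'I_m -> 'I_n -> int) (fuel : nat)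
    (Rp : {set 'I_m}) (U : {set 'I_n}) : option (seq {set 'I_n}) :=
  match fuel with
  | 0%N => None
  | fuel'.+1 =>
    let T := [set j in U | [forall i in Rp, (0 <= alpha i j)%R]] in
    if T == set0 then None
    else
      let Rp' := Rp :\: [set i in Rp | [exists j in T, (0 < alpha i j)%R]] in
      let U' := U :\: T in
      if Rp' == set0 then Some [:: T; U']
      else match flood_aux alpha fuel' Rp' U' with
           | None => None
           | Some ts => Some (T :: ts)
           end
  end.

(* Each successful round assigns a nonempty tier, so at most
   n rounds can succeed before the algorithm fails; fuel n.+1 never truncates it. *)
Definition flooding (m n : nat) (alpha : 'I_m -> 'I_n -> int)
  : option (seq {set 'I_n}) :=
  flood_aux alpha n.+1 [set: 'I_m] [set: 'I_n].

(* Given the tier sizes |T_1|,...,|T_M|, the heights h_1,...,h_M with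
   h_k = 1 + \sum_{i=k+1}^M 2 h_i |T_i|  (so h_M = 1). *)
Fixpoint tier_heights (sizes : seq nat) : seq int :=
  match sizes with
  | [::] => [::]
  | _ :: cs =>
    let hs := tier_heights cs in
    (1 + \sum_(p <- zip hs cs) 2 * p.1 * (p.2)%:Z) :: hs
  end.

(* Index (0-based) of the tier containing q. *)
Definition tier_index (n : nat) (tiers : seq {set 'I_n}) (q : 'I_n) : nat :=
  find (fun T : {set 'I_n} => q \in T) tiers.

Definition flood_height (n : nat) (tiers : seq {set 'I_n}) (q : 'I_n) : int :=
  nth 0 (tier_heights (map (fun T : {set 'I_n} => #|T|) tiers)) (tier_index tiers q).

(** If f_i leaves R' in round k, then all its coefficients on T_k are
    nonnegative and one is positive, while its coefficients on the earlier
    tiers are nonnegative as well.  Hence f_i is at least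
    h_k - \sum_(l > k) 2 h_l |T_l| = 1, because every coefficient is at
    least -2 and there are |T_l| crossings at height h_l. *)

From mathcomp Require Import all_boot all_order all_algebra.
Set Implicit Arguments. Unset Strict Implicit. Unset Printing Implicit Defensive.
Import Order.TTheory GRing.Theory Num.Theory.
Local Open Scope ring_scope.

Definition tier_sizes n (ts : seq {set 'I_n}) : seq nat :=
  map (fun T : {set 'I_n} => #|T|) ts.

Definition tier_weight (cs : seq nat) : int :=
  \sum_(p <- zip (tier_heights cs) cs) 2 * p.1 * (p.2)%:Z.

Lemma tier_weight_nil : tier_weight [::] = 0.
Proof. by rewrite /tier_weight big_nil. Qed.

Lemma tier_weight_cons c cs :
  tier_weight (c :: cs) = 2 * (1 + tier_weight cs) * c%:Z + tier_weight cs.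
Proof. by rewrite /tier_weight /= big_cons. Qed.

Lemma tier_weight_ge0 cs : 0 <= tier_weight cs.
Proof.
elim: cs => [|c cs IH]; first by rewrite tier_weight_nil.
by rewrite tier_weight_cons addr_ge0 // !mulr_ge0 // addr_ge0.
Qed.

Section FloodHeight.
Variable n : nat.
Implicit Types (T U V : {set 'I_n}) (ts : seq {set 'I_n}) (a : 'I_n -> int).

Lemma flood_height_head T ts j : j \in T ->
  flood_height (T :: ts) j = 1 + tier_weight (tier_sizes ts).
Proof. by move=> jT; rewrite /flood_height /tier_index /= jT. Qed.

Lemma flood_height_behead T ts j : j \notin T ->
  flood_height (T :: ts) j = flood_height ts j.
Proof. by move=> /negbTE jT; rewrite /flood_height /tier_index /= jT. Qed.

Lemma flood_height_ge0 ts j : 0 <= flood_height ts j.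
Proof.
elim: ts => [|T ts IH]; first by rewrite /flood_height nth_nil.
have [/flood_height_head -> | /flood_height_behead -> //] := boolP (j \in T).
by rewrite addr_ge0 ?tier_weight_ge0.
Qed.

Lemma sum_flood_height_cons a T ts U : T \subset U ->
  \sum_(j in U) a j * flood_height (T :: ts) j =
  (\sum_(j in T) a j) * (1 + tier_weight (tier_sizes ts))
  + \sum_(j in U :\: T) a j * flood_height ts j.
Proof.
move=> TU; rewrite (big_setID T) /= (setIidPr TU) mulr_suml; congr (_ + _).
  by apply: eq_bigr => j /flood_height_head ->.
by apply: eq_bigr => j; rewrite inE => /andP[/flood_height_behead -> _].
Qed.

(* Each crossing of a covered set is counted at most once, in its first tier. *)
Lemma sum_double_flood_height_le ts V : V \subset \bigcup_(X <- ts) X ->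
  \sum_(j in V) 2 * flood_height ts j <= tier_weight (tier_sizes ts).
Proof.
elim: ts V => [|T ts IH] V.
  by rewrite big_nil subset0 => /eqP ->; rewrite big_set0 tier_weight_nil.
rewrite big_cons => Vcov; rewrite tier_weight_cons (big_setID T) /= lerD //.
  rewrite (eq_bigr (fun=> 2 * (1 + tier_weight (tier_sizes ts)))); last first.
    by move=> j; rewrite inE => /andP[_ /flood_height_head ->].
  rewrite sumr_const -[X in X <= _]mulr_natr ler_wpM2l //.
  - by rewrite mulr_ge0 // addr_ge0 ?tier_weight_ge0.
  - by rewrite natz lez_nat subset_leq_card ?subsetIr.
rewrite (eq_bigr (fun j => 2 * flood_height ts j)); last first.
  by move=> j; rewrite inE => /andP[/flood_height_behead -> _].
apply: IH; apply/subsetP => j; rewrite inE => /andP[jT /(subsetP Vcov)].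
by rewrite inE (negbTE jT).
Qed.

Lemma sum_flood_height_ge a ts V :
  (forall j, -2 <= a j) -> V \subset \bigcup_(X <- ts) X ->
  - tier_weight (tier_sizes ts) <= \sum_(j in V) a j * flood_height ts j.
Proof.
move=> a_ge Vcov; apply: (le_trans _ (ler_sum _ (fun j _ =>
  ler_wpM2r (flood_height_ge0 ts j) (a_ge j)))).
by rewrite (eq_bigr _ (fun j _ => mulNr _ _)) sumrN lerN2
  sum_double_flood_height_le.
Qed.

End FloodHeight.

Section Flooding.
Variables (m n : nat) (alpha : 'I_m -> 'I_n -> int).

Lemma flood_aux_cover fuel Rp U ts : flood_aux alpha fuel Rp U = Some ts ->
  U \subset \bigcup_(X <- ts) X.
Proof.
elim: fuel Rp U ts => [//|fuel IH] Rp U ts /=.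
set T := [set j in U | _]; case: ifP => // _.
set U' := U :\: T; have U_split : U \subset T :|: U'.
  by apply/subsetP => j jU; rewrite !inE jU andbT orbN.
case: ifP => [_ [<-] | _].
  by rewrite !big_cons big_nil setU0.
case E: flood_aux => [ts'|] // [<-].
by rewrite big_cons (subset_trans U_split) ?setUS ?(IH _ _ _ E).
Qed.

Hypothesis alpha_ge : forall i j, -2 <= alpha i j.

Lemma flood_aux_sound fuel Rp U ts : flood_aux alpha fuel Rp U = Some ts ->
  forall i, i \in Rp -> 0 < \sum_(j in U) alpha i j * flood_height ts j.
Proof.
elim: fuel Rp U ts => [//|fuel IH] Rp U ts /=.
set T := [set j in U | _]; case: ifP => // _.
set Rp' := _ :\: _; set U' := U :\: T => succ i iRp.
have [ts' [-> cov rec]] : exists ts', [/\ ts = T :: ts',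
    U' \subset \bigcup_(X <- ts') X &
    i \in Rp' -> 0 < \sum_(j in U') alpha i j * flood_height ts' j].
  move: succ; case: ifP => [/eqP Rp'0 [<-] | _].
    by exists [:: U']; rewrite Rp'0 inE big_cons big_nil setU0.
  case E: flood_aux => [ts'|] // [<-].
  by exists ts'; split; [|exact: flood_aux_cover E | exact: IH _ _ _ E i].
have T_ge0 j : j \in T -> 0 <= alpha i j.
  by rewrite inE => /andP[_ /forall_inP]; apply.
have w_ge0 := tier_weight_ge0 (tier_sizes ts').
rewrite sum_flood_height_cons; last by apply/subsetP => j; rewrite inE => /andP[].
have [/rec rest_gt0 | ] := boolP (i \in Rp').
  by rewrite ltr_wpDl // mulr_ge0 ?sumr_ge0 ?addr_ge0.
rewrite !inE iRp andbT negbK => /exists_inP[j0 j0T alpha_j0_gt0].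
have sumT_ge1 : 1 <= \sum_(j in T) alpha i j.
  rewrite (bigD1 j0) //= -[1]addr0 lerD //.
  by apply: sumr_ge0 => j /andP[/T_ge0].
have tierT_ge : 1 + tier_weight (tier_sizes ts') <=
    (\sum_(j in T) alpha i j) * (1 + tier_weight (tier_sizes ts')).
  by rewrite -[X in X <= _]mul1r ler_wpM2r ?addr_ge0.
have := lerD tierT_ge (sum_flood_height_ge (alpha_ge i) cov).
by apply: lt_le_trans; rewrite addrK.
Qed.

End Flooding.

Theorem proposition5p1 (m n : nat) (alpha : 'I_m -> 'I_n -> int)
  (halpha : forall i j, -2 <= alpha i j <= 2)
  (tiers : seq {set 'I_n})
  (hsucc : flooding alpha = Some tiers) :
  forall i : 'I_m, 0 < \sum_(j < n) alpha i j * flood_height tiers j.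
Proof.
move=> i; have alpha_ge i' j : -2 <= alpha i' j by case/andP: (halpha i' j).
have := flood_aux_sound alpha_ge hsucc (in_setT i).
by under [X in 0 < X -> _]eq_bigl do rewrite in_setT.
Qed.
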